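(* Let $\Gamma\in\mathcal S$ have $n$ vertices and let $\varphi$ be an embedding as in the definition of $\mathcal S$. Then for every vertex $v$, either $\varphi(v)=E_{i_v}-\sum_{j\in J_v}E_j$ or $\varphi(v)=-2E_{i_v}-\sum_{j\in J_v}E_j$, for some index $i_v$ and some subset $J_v\subset\{1,\dots,n\}$ with $i_v\notin J_v$.
   Context: A plumbing tree is a finite tree $\Gamma$ each of whose vertices $v$ carries an integer decoration $d(v)$. $\Gamma$ is minimal if no vertex has decoration $-1$. For $n\ge 1$ let $(\mathbb Z^n,Q_n)$ be the lattice with basis $E_1,\dots,E_n$ and $Q_n(E_i,E_j)=-\delta_{ij}$, and let $K=\sum_{i=1}^n E_i$. A plumbing tree $\Gamma$ on $n$ vertices is a symplectic plumbing tree if there is a map $\varphi$ (an embedding) from its vertex set to $\mathbb Z^n$ such that: for distinct vertices $v_1,v_2$, $Q_n(\varphi(v_1),\varphi(v_2))$ is $1$ if they are adjacent and $0$ otherwise; $Q_n(\varphi(v),\varphi(v))=d(v)$ for every $v$; and $Q_n(\varphi(v),K)+Q_n(\varphi(v),\varphi(v))=-2$ for every $v$. $\mathcal S$ is the set of minimal, connected symplectic plumbing trees. *)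

From HB Require Import structures.
From mathcomp Require Import all_boot all_order all_algebra.
Set Implicit Arguments. Unset Strict Implicit. Unset Printing Implicit Defensive.
Import GRing.Theory Num.Theory.
Local Open Scope ring_scope.

(* The lattice Z^n, vectors indexed by 'I_n (E_1..E_n become E_0..E_{n-1}). *)
Definition lat (n : nat) := {ffun 'I_n -> int}.

Definition Qn (n : nat) (x y : lat n) : int := - \sum_(i < n) x i * y i.

Definition Ebasis (n : nat) (i : 'I_n) : lat n := [ffun k => (k == i)%:R].

Definition Kcan (n : nat) : lat n := \sum_(i < n) Ebasis i.

Definition is_tree (V : finType) (adj : rel V) : Prop :=
  irreflexive adj /\ symmetric adj /\ (forall x y : V, connect adj x y) /\
  (forall s : seq V, (2 < size s)%N -> uniq s -> ~~ cycle adj s).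

Definition minimal_plumbing (V : finType) (d : V -> int) : Prop :=
  forall v, d v <> -1.

Definition symp_embedding (V : finType) (adj : rel V) (d : V -> int) (n : nat)
  (phi : V -> lat n) : Prop :=
  (forall v w : V, v != w -> Qn (phi v) (phi w) = (if adj v w then 1 else 0)) /\
  (forall v : V, Qn (phi v) (phi v) = d v) /\
  (forall v : V, Qn (phi v) (Kcan n) + Qn (phi v) (phi v) = -2).

(** Only the adjunction condition matters.  For [x = phi v] it says
    [\sum_k x_k (x_k + 1) = 2].  Every [t (t + 1)] is a nonnegative even
    integer, so exactly one coordinate has [x_i (x_i + 1) = 2], i.e.
    [x_i] is [1] or [-2], and all other coordinates satisfy
    [x_k (x_k + 1) = 0], i.e. they are [0] or [-1]. *)

From HB Require Import structures.
From mathcomp Require Import all_boot all_order all_algebra.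
From mathcomp Require Import zify.

Set Implicit Arguments.
Unset Strict Implicit.
Unset Printing Implicit Defensive.
Import GRing.Theory Num.Theory.
Local Open Scope ring_scope.

Section ProductOfConsecutive.
Variable t : int.

Lemma mul_addr1_ge0 : 0 <= t * (t + 1).
Proof. nia. Qed.

Lemma mul_addr1_eq0 : t * (t + 1) = 0 -> t = 0 \/ t = -1.
Proof. nia. Qed.

Lemma mul_addr1_eq2 : t * (t + 1) = 2 -> t = 1 \/ t = -2.
Proof. nia. Qed.

(* The values of [t (t + 1)] are [0, 2, 6, 12, ...]. *)
Lemma mul_addr1_le2 : t * (t + 1) <= 2 -> t * (t + 1) = 0 \/ t * (t + 1) = 2.
Proof.
move=> le2; have /andP[lb ub] : -2 <= t <= 1 by apply/andP; split; nia.
have [->|[->|[->|->]]] : t = -2 \/ t = -1 \/ t = 0 \/ t = 1 by lia.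
all: by [left | right].
Qed.

End ProductOfConsecutive.

Lemma sum_mul_addr1_eq2 (I : finType) (x : I -> int) :
  \sum_k x k * (x k + 1) = 2 ->
  exists i, (x i = 1 \/ x i = -2) /\
            forall k, k != i -> x k = 0 \/ x k = -1.
Proof.
move=> sum2.
have [i xi_neq0 | all0] := pickP (fun k => x k * (x k + 1) != 0); last first.
  by move: sum2; rewrite big1 // => k _; apply/eqP/negbFE/all0.
move: sum2; rewrite (bigD1 i) //=.
set r := \sum_(k | k != i) _ => sumi.
have r_ge0 : 0 <= r by apply: sumr_ge0 => k _; apply: mul_addr1_ge0.
have xi2 : x i * (x i + 1) = 2.
  have le2 : x i * (x i + 1) <= 2 by rewrite -sumi lerDl.
  by have [/eqP|//] := mul_addr1_le2 le2; rewrite (negbTE xi_neq0).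
have /psumr_eq0P r0 : r = 0 by move: sumi; rewrite xi2; lia.
exists i; split; first exact: mul_addr1_eq2.
by move=> k ki; apply/mul_addr1_eq0/r0 => // j _; apply: mul_addr1_ge0.
Qed.

Lemma sum_Ebasis_at (n : nat) (J : {set 'I_n}) (k : 'I_n) :
  (\sum_(j in J) Ebasis j) k = (k \in J)%:R.
Proof.
rewrite sum_ffunE big_mkcond (bigD1 k) //= big1 => [|j jk].
  by rewrite addr0 ffunE eqxx; case: (k \in J).
by rewrite ffunE eq_sym (negbTE jk); case: (j \in J).
Qed.

Lemma Kcan_at (n : nat) (k : 'I_n) : Kcan n k = 1.
Proof.
have -> : Kcan n = \sum_(j in [set: 'I_n]) Ebasis j.
  by apply: eq_bigl => j; rewrite inE.
by rewrite sum_Ebasis_at inE.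
Qed.

Lemma QnK_addQnn (n : nat) (x : lat n) :
  Qn x (Kcan n) + Qn x x = - \sum_k x k * (x k + 1).
Proof.
rewrite /Qn -opprD -big_split; apply: congr1; apply: eq_bigr => k _ /=.
by rewrite Kcan_at mulrDr mulr1 addrC.
Qed.

Lemma lat_Ebasis_sub_sum (n : nat) (x : lat n) (i : 'I_n) :
  x i != -1 -> (forall k, k != i -> x k = 0 \/ x k = -1) ->
  x = Ebasis i *~ x i - \sum_(j in [set k | x k == -1]) Ebasis j.
Proof.
move=> xi_neqN1 xk; apply/ffunP => k.
rewrite !ffunE ffunMzE sum_Ebasis_at inE ffunE.
have [-> | ki] := eqVneq k i; first by rewrite (negbTE xi_neqN1) subr0 intz.
by rewrite mul0rz add0r; case: (xk k ki) => ->.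
Qed.

Theorem lemma3p1 (n : nat) (V : finType) (adj : rel V) (d : V -> int)
  (phi : V -> lat n) :
  (0 < n)%N -> #|V| = n ->
  is_tree adj -> minimal_plumbing d -> symp_embedding adj d phi ->
  forall v : V, exists (i : 'I_n) (J : {set 'I_n}),
    i \notin J /\
    (phi v = Ebasis i - \sum_(j in J) Ebasis j \/
     phi v = - (Ebasis i *+ 2) - \sum_(j in J) Ebasis j).
Proof.
move=> _ _ _ _ [_ [_ adjunction]] v.
have /sum_mul_addr1_eq2 [i [xi xk]] : \sum_k phi v k * (phi v k + 1) = 2.
  by apply: oppr_inj; rewrite -QnK_addQnn adjunction.
have xi_neqN1 : phi v i != -1 by case: xi => ->.
exists i, [set k | phi v k == -1]; split; first by rewrite inE.
have phiE := lat_Ebasis_sub_sum xi_neqN1 xk.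
(* [f *~ -2] and [- (f *+ 2)] are convertible, which closes the second case. *)
by case: xi => xi; [left | right]; rewrite {1}phiE xi ?mulr1z.
Qed.
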